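(* Let $S$ be a numerical semigroup, let $u\in\mathrm U(\mathrm{Betti}(S))$ and let $\Lambda=\{b\in\mathrm{Betti}(S): b\le_S u\}$. Let $s\in S\setminus\Lambda$ be such that $u\le_S b$ for every $b\in\mathrm{Betti}(S)\setminus\Lambda$ with $b\le_S s$. Then the subgraph of $\nabla_s$ induced on the vertex set $\mathrm B(s;\Lambda)$ is connected.
   Context: A numerical semigroup $S$ is a submonoid of $(\mathbb N,+)$ with finite complement, minimally generated by $\{n_1,\dots,n_e\}$. Write $a\le_S b$ if $b-a\in S$. Let $\varphi:\mathbb N^e\to S$, $\varphi(a)=\sum_ia_in_i$; $\mathrm Z(s)=\varphi^{-1}(s)$. $\nabla_s$ is the graph on $\mathrm Z(s)$ with distinct $x,y$ adjacent iff $x\cdot y\ne0$; $s$ is a Betti element if $\nabla_s$ is disconnected; $\mathrm{Betti}(S)$ is the set of Betti elements. For a poset $(X,\le)$, $\mathrm U(X)=\{x\in X: \{y\in X:y\le x\}\text{ is totally ordered}\}$; here $X=(\mathrm{Betti}(S),\le_S)$. A factorization $z\in\mathrm Z(s)$ is isolated if $z\cdot x=0$ for all $x\in\mathrm Z(s)\setminus\{z\}$; $\mathrm I(t)$ is the set of isolated factorizations of $t$ and $\mathrm I(\Lambda)=\bigcup_{t\in\Lambda}\mathrm I(t)$. $\mathrm I_s(S)$ is the set of $z\in\mathbb N^e$ such that $\varphi(z)$ has exactly one factorization. For $\Lambda\subseteq S$, $\mathrm B(s;\Lambda)=\{w+x_1+\cdots+x_l\in\mathrm Z(s): w\in\mathrm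 I_s(S),\ l\ge0,\ x_1,\dots,x_l\in\mathrm I(\Lambda)\}$. *)

From mathcomp Require Import all_boot.
From Stdlib Require Import Relations.
Set Implicit Arguments. Unset Strict Implicit. Unset Printing Implicit Defensive.

(* A numerical semigroup S given by its (candidate) minimal generators
   n_0, ..., n_{e-1}; factorizations are elements of N^e. *)
Definition fact (e : nat) := {ffun 'I_e -> nat}.

Definition phi (e : nat) (n : 'I_e -> nat) (a : fact e) : nat :=
  \sum_(i < e) a i * n i.

Definition inS (e : nat) (n : 'I_e -> nat) (s : nat) : Prop :=
  exists a : fact e, phi n a = s.

Definition min_gen_num_sgp (e : nat) (n : 'I_e -> nat) : Prop :=
  [/\ forall i, 0 < n i,
      exists N, forall m, N <= m -> inS n m
    & forall i, ~ exists a : fact e, a i = 0 /\ phi n a = n i].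

Definition leS (e : nat) (n : 'I_e -> nat) (a b : nat) : Prop :=
  exists c, inS n c /\ b = a + c.

Definition Zf (e : nat) (n : 'I_e -> nat) (s : nat) (z : fact e) : Prop :=
  phi n z = s.

Definition dot (e : nat) (x y : fact e) : nat := \sum_(i < e) x i * y i.

Definition adj (e : nat) (x y : fact e) : Prop := x <> y /\ dot x y <> 0.

Definition connected_on (T : Type) (P : T -> Prop) (R : T -> T -> Prop) : Prop :=
  forall x y, P x -> P y ->
    clos_refl_trans T (fun a b => P a /\ P b /\ R a b) x y.

Definition betti (e : nat) (n : 'I_e -> nat) (s : nat) : Prop :=
  inS n s /\ ~ connected_on (Zf n s) (@adj e).

Definition in_U_betti (e : nat) (n : 'I_e -> nat) (u : nat) : Prop :=
  betti n u /\
  forall a b, betti n a -> betti n b -> leS n a u -> leS n b u ->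
    leS n a b \/ leS n b a.

Definition isolated (e : nat) (n : 'I_e -> nat) (t : nat) (z : fact e) : Prop :=
  Zf n t z /\ forall x, Zf n t x -> x <> z -> dot z x = 0.

Definition isolated_set (e : nat) (n : 'I_e -> nat) (L : nat -> Prop) (z : fact e) : Prop :=
  exists t, L t /\ isolated n t z.

Definition Is (e : nat) (n : 'I_e -> nat) (z : fact e) : Prop :=
  forall x : fact e, phi n x = phi n z -> x = z.

Definition fsum (e : nat) (w : fact e) (xs : seq (fact e)) : fact e :=
  [ffun i => w i + \sum_(x <- xs) x i].

Definition Bset (e : nat) (n : 'I_e -> nat) (s : nat) (L : nat -> Prop) (z : fact e) : Prop :=
  Zf n s z /\
  exists (w : fact e) (xs : seq (fact e)),
    [/\ Is n w, (forall x, x \in xs -> isolated_set n L x) & z = fsum w xs].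

From mathcomp Require Import all_boot.
From mathcomp Require Import zify.
From Stdlib Require Import Relations Classical.
Set Implicit Arguments. Unset Strict Implicit. Unset Printing Implicit Defensive.

(* A factorization z that is not the unique factorization of
   phi(z) lies above a "minimal" such factorization z0 (all of whose one-step
   decrements are unique factorizations); z0 is isolated in Z(phi(z0)), so
   phi(z0) is a Betti element.  Peeling such z0 off repeatedly writes z as
   w + x_1 + ... + x_l with w in I_s(S) and x_k isolated factorizations of
   Betti elements below phi(z); if all those Betti elements lie in Λ, then
   z has the shape of an element of B(-; Λ).

   Take z = w + x + ... and z' = w' + x' + r' in B(s; Λ), with
   x in I(b), x' in I(b') and b <=_S b' = b + phi(f).  Every Betti element
   below phi(f + w') is in Λ (otherwise it would be >= u >= b', forcing
   b <=_S phi(w'), impossible since w' is a unique factorization), so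
   f + w' decomposes and z'' = x + f + w' + r' lies in B(s; Λ).  Now z''
   shares the support of x with z and the (nonzero) support of w' + r' with
   z', giving a path z -- z'' -- z'.  Since b, b' <=_S u and u in U(Betti(S)),
   b and b' are comparable, so the bridge applies in one direction. *)

Section InducedPaths.
Variables (T : Type) (P : T -> Prop) (R : T -> T -> Prop).

Definition linked : T -> T -> Prop :=
  clos_refl_trans T (fun a b => P a /\ P b /\ R a b).

Lemma linked_sym (R_sym : forall a b, R a b -> R b a) a c :
  linked a c -> linked c a.
Proof.
elim=> [x y [Px [Py Rxy]]||x y z _ Hyx _ Hzy].
- by apply: rt_step; split; [|split; [|apply: R_sym]].
- exact: rt_refl.
- exact: rt_trans Hzy Hyx.
Qed.

Lemma lonely_vertex_disconnects a c :
  P a -> P c -> a <> c -> (forall y, P y -> ~ R a y) -> ~ connected_on P R.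
Proof.
move=> Pa Pc Hac Hlonely Hconn.
case: (clos_rt_rt1n _ _ _ _ (Hconn a c Pa Pc)) Hac => [//|y z [_ [Py Ray]] _ _].
exact: Hlonely Py Ray.
Qed.

End InducedPaths.

Section Factorizations.
Variables (e : nat) (n : 'I_e -> nat).

Definition fadd (a b : fact e) : fact e := [ffun i => a i + b i].
Definition unitf (i : 'I_e) : fact e := [ffun j => nat_of_bool (j == i)].
Definition decf (z : fact e) (i : 'I_e) : fact e := [ffun j => z j - (j == i)].
Definition lef (a b : fact e) : Prop := forall i, a i <= b i.
Definition sumf (xs : seq (fact e)) : fact e := [ffun i => \sum_(x <- xs) x i].

Lemma phi_add (a b : fact e) : phi n (fadd a b) = phi n a + phi n b.
Proof. by rewrite /phi -big_split; apply: eq_bigr => i _; rewrite ffunE mulnDl. Qed.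

Lemma phi_unit (i : 'I_e) : phi n (unitf i) = n i.
Proof.
rewrite /phi (bigD1 i) //= big1 ?ffunE ?eqxx ?mul1n ?addn0 //.
by move=> j /negbTE Hj; rewrite ffunE Hj.
Qed.

Lemma decfK (z : fact e) (i : 'I_e) : 0 < z i -> fadd (decf z i) (unitf i) = z.
Proof. by move=> Hz; apply/ffunP => j; rewrite !ffunE; case: eqVneq => [->|] /=; lia. Qed.

Lemma phi_decf (z : fact e) (i : 'I_e) : 0 < z i -> phi n z = phi n (decf z i) + n i.
Proof. by move=> Hz; rewrite -{1}(decfK Hz) phi_add phi_unit. Qed.

Lemma lef_split (a b : fact e) : lef a b -> exists c, b = fadd a c.
Proof. by move=> Hab; exists [ffun i => b i - a i]; apply/ffunP => i; rewrite !ffunE subnKC. Qed.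

Lemma fsumE (w : fact e) xs : fsum w xs = fadd w (sumf xs).
Proof. by apply/ffunP => i; rewrite !ffunE. Qed.

Lemma fsum_nil (w : fact e) : fsum w [::] = w.
Proof. by apply/ffunP => i; rewrite !ffunE big_nil addn0. Qed.

Lemma fsum_cons (w x : fact e) xs : fsum w (x :: xs) = fadd x (fsum w xs).
Proof. by apply/ffunP => i; rewrite !ffunE big_cons; lia. Qed.

Lemma dot_neq0P (x y : fact e) : dot x y <> 0 <-> exists i, 0 < x i /\ 0 < y i.
Proof.
rewrite /dot; split=> [Hxy|[i [Hx Hy]]]; last first.
  have : 0 < x i * y i by rewrite muln_gt0 Hx.
  by rewrite (bigD1 i) //=; lia.
apply: NNPP => Hdisj; apply: Hxy; apply: big1 => i _.
case: (posnP (x i)) => [->|Hx] //; case: (posnP (y i)) => [->|Hy]; first exact: muln0.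
by case: Hdisj; exists i.
Qed.

Lemma dotC (x y : fact e) : dot x y = dot y x.
Proof. by apply: eq_bigr => i _; rewrite mulnC. Qed.

Lemma adj_sym (x y : fact e) : adj x y -> adj y x.
Proof. by move=> [Hne Hd]; split; [apply: nesym | rewrite dotC]. Qed.

Lemma linked_common (P : fact e -> Prop) (a c : fact e) :
  P a -> P c -> (exists i, 0 < a i /\ 0 < c i) -> linked P (@adj e) a c.
Proof.
move=> Pa Pc /dot_neq0P Hd; case: (classic (a = c)) => [->|Hne]; first exact: rt_refl.
by apply: rt_step.
Qed.

Lemma phi_pos (x : fact e) : 0 < phi n x -> exists i, 0 < x i.
Proof.
move=> H; apply: NNPP => Hx; move: H; rewrite /phi big1 // => i _.
by case: (posnP (x i)) => [->|Hi] //; case: Hx; exists i.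
Qed.

Lemma inS_phi (x : fact e) : inS n (phi n x).
Proof. by exists x. Qed.

Lemma inS_add a b : inS n a -> inS n b -> inS n (a + b).
Proof. by move=> [x <-] [y <-]; exists (fadd x y); rewrite phi_add. Qed.

Lemma leS_addr a c : inS n c -> leS n a (a + c).
Proof. by move=> Hc; exists c. Qed.

Lemma leS_trans a b c : leS n a b -> leS n b c -> leS n a c.
Proof.
move=> [k [Hk ->]] [k' [Hk' ->]]; exists (k + k').
by split; [apply: inS_add | rewrite addnA].
Qed.

Lemma leS_cancel c a b : leS n (c + a) (c + b) -> leS n a b.
Proof. by move=> [k [Hk Hb]]; exists k; split => //; lia. Qed.

Lemma betti_two b : betti n b -> exists y1 y2, [/\ Zf n b y1, Zf n b y2 & y1 <> y2].
Proof.
move=> [_ Hdisc]; apply: NNPP => Hn; apply: Hdisc => x y Hx Hy.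
have -> : x = y by apply: NNPP => Hxy; apply: Hn; exists x, y.
exact: rt_refl.
Qed.

(* An element with a unique factorization has no Betti element below it:
   two factorizations of b would give two factorizations of phi(w). *)
Lemma Is_no_betti_below (w : fact e) b : Is n w -> betti n b -> ~ leS n b (phi n w).
Proof.
move=> Hw /betti_two [y1 [y2 [H1 H2 Hne]]] [k [[g <-] Hwk]].
have E1 : fadd y1 g = w by apply: Hw; rewrite phi_add Hwk H1.
have E2 : fadd y2 g = w by apply: Hw; rewrite phi_add Hwk H2.
apply: Hne; apply/ffunP => i.
by have := congr1 (fun f : fact e => f i) (etrans E1 (esym E2)); rewrite /= !ffunE => /addIn.
Qed.

Hypothesis n_pos : forall i, 0 < n i.

Lemma phi_eq0 (y : fact e) : phi n y = 0 -> forall i, y i = 0.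
Proof.
move=> H i; have : y i * n i <= phi n y by rewrite /phi (bigD1 i) //= leq_addr.
by rewrite H; have := n_pos i; nia.
Qed.

Lemma zero_Is (z : fact e) : phi n z = 0 -> Is n z.
Proof.
move=> H x Hx; apply/ffunP => i.
by rewrite (phi_eq0 H) (phi_eq0 (etrans Hx H)).
Qed.

(* Betti elements are nonzero, since 0 has a unique factorization. *)
Lemma betti_pos b : betti n b -> 0 < b.
Proof.
move=> /betti_two [y1 [y2 [H1 H2 Hne]]]; rewrite lt0n; apply/eqP => Hb.
by apply: Hne; rewrite (zero_Is (etrans H2 Hb) (etrans H1 (esym H2))).
Qed.

Lemma minimal_nonunique (z : fact e) : ~ Is n z ->
  exists z0, [/\ lef z0 z, ~ Is n z0 & forall i, 0 < z0 i -> Is n (decf z0 i)].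
Proof.
have [k] := ubnP (phi n z); elim: k z => // k IH z /ltnSE Hk Hz.
case: (classic (forall i, 0 < z i -> Is n (decf z i))) => [Hmin|Hnot].
  by exists z; split=> // i.
have [i Hi_dec] := not_all_ex_not _ _ Hnot.
have [Hi Hdec] := imply_to_and _ _ Hi_dec.
have Hlt : phi n (decf z i) < k by have := phi_decf Hi; have := n_pos i; lia.
have [z0 [Hle Hz0 Hmin]] := IH _ Hlt Hdec.
by exists z0; split => // j; apply: leq_trans (Hle j) _; rewrite ffunE; lia.
Qed.

(* A minimal non-unique factorization shares no index with any other
   factorization of its value: a common index i would give two equal
   (hence, by minimality, identical) decrements. *)
Lemma minimal_isolated (z0 : fact e) :
  (forall i, 0 < z0 i -> Is n (decf z0 i)) -> isolated n (phi n z0) z0.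
Proof.
move=> Hmin; split=> // y; rewrite /Zf => Hy Hne; apply: NNPP => /dot_neq0P [i [H0 H1]].
apply: Hne; have Hd : decf y i = decf z0 i.
  by apply: (Hmin i H0); have := phi_decf H0; have := phi_decf H1; lia.
by rewrite -(decfK H0) -(decfK H1) Hd.
Qed.

Lemma nonunique_isolated_betti (z : fact e) : ~ Is n z ->
  exists z0 z1, [/\ z = fadd z0 z1, betti n (phi n z0) & isolated n (phi n z0) z0].
Proof.
move=> Hz; have [z0 [Hle Hnu Hmin]] := minimal_nonunique Hz.
have [z1 ->] := lef_split Hle; have Hiso := minimal_isolated Hmin.
have [x [Hx Hxz0]] : exists x, phi n x = phi n z0 /\ x <> z0.
  by apply: NNPP => H; apply: Hnu => x Hx; apply: NNPP => Hne; apply: H; exists x.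
exists z0, z1; split=> //; split; first exact: inS_phi.
apply: (lonely_vertex_disconnects (erefl _) Hx (nesym Hxz0)) => y Hy [Hne Hdot].
exact: Hdot (Hiso.2 y Hy (nesym Hne)).
Qed.

Lemma decompose (L : nat -> Prop) (z : fact e) :
  (forall d, betti n d -> leS n d (phi n z) -> L d) ->
  exists w xs, [/\ Is n w, forall x, x \in xs -> isolated_set n L x & z = fsum w xs].
Proof.
have [k] := ubnP (phi n z); elim: k z => // k IH z /ltnSE Hk HL.
case: (classic (Is n z)) => [Hz|Hz]; first by exists z, [::]; rewrite fsum_nil.
have [z0 [z1 [Ez Hb Hiso]]] := nonunique_isolated_betti Hz.
have Ephi : phi n z = phi n z0 + phi n z1 by rewrite Ez phi_add.
have Hlt : phi n z1 < k by have := betti_pos Hb; lia.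
have HL1 : forall d, betti n d -> leS n d (phi n z1) -> L d.
  move=> d Hd Hdz1; apply: HL => //; rewrite Ephi addnC.
  exact: leS_trans Hdz1 (leS_addr _ (inS_phi z0)).
have [w [xs [Hw Hxs Ez1]]] := IH z1 Hlt HL1.
exists w, (z0 :: xs); split=> //; last by rewrite Ez Ez1 fsum_cons.
move=> y; rewrite in_cons => /orP [/eqP ->|/Hxs //].
by exists (phi n z0); split=> //; apply: HL => //; rewrite Ephi; apply: leS_addr; apply: inS_phi.
Qed.

End Factorizations.

Section Bridge.
Variables (e : nat) (n : 'I_e -> nat) (u s : nat) (L : nat -> Prop).
Hypotheses (n_pos : forall i, 0 < n i)
  (L_betti : forall b, L b -> betti n b) (L_le_u : forall b, L b -> leS n b u)
  (s_notin_L : ~ L s)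
  (above_u : forall b, betti n b -> ~ L b -> leS n b s -> leS n u b).

Lemma betti_below_gap (b b' : nat) (f w' : fact e) :
  L b -> L b' -> b' = b + phi n f -> Is n w' -> leS n (b' + phi n w') s ->
  forall d, betti n d -> leS n d (phi n (fadd f w')) -> L d.
Proof.
move=> Lb Lb' Eb' Iw' Hs d Bd Hd; apply: NNPP => nLd.
have Hfw : leS n (phi n (fadd f w')) s.
  apply: leS_trans Hs; rewrite phi_add Eb' -addnA [b + _]addnC.
  exact: leS_addr (L_betti Lb).1.
have Hud : leS n u d := above_u Bd nLd (leS_trans Hd Hfw).
apply: (Is_no_betti_below Iw' (L_betti Lb)); apply: (@leS_cancel _ _ (phi n f)).
rewrite [phi n f + b]addnC -Eb' -phi_add.
exact: leS_trans (L_le_u Lb') (leS_trans Hud Hd).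
Qed.

(* The bridge: z = w + x + ... and z' = w' + x' + ... in B(s; L) with
   x in I(b), x' in I(b') and b <=_S b' are linked through
   z'' = x + f + w' + (tail of z'), where b' = b + phi(f). *)
Lemma bridge (w w' x x' : fact e) (xr xr' : seq (fact e)) (b b' : nat) :
  Bset n s L (fsum w (x :: xr)) -> Bset n s L (fsum w' (x' :: xr')) -> Is n w' ->
  (forall y, y \in xr' -> isolated_set n L y) ->
  isolated n b x -> L b -> isolated n b' x' -> L b' -> leS n b b' ->
  linked (Bset n s L) (@adj e) (fsum w (x :: xr)) (fsum w' (x' :: xr')).
Proof.
move=> Bz Bz' Iw' Hxr' Hx Lb Hx' Lb' [c [[f Ef] Eb']]; rewrite -Ef in Eb'.
set r := fsum w' xr'; have Hr : r = fadd w' (sumf xr') := fsumE w' xr'.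
have Es : s = b' + phi n r by case: Bz' => <- _; rewrite fsum_cons phi_add Hx'.1.
have Hgap := betti_below_gap Lb Lb' Eb' Iw'.
have [|w'' [xs'' [Iw'' Hxs'' Eg]]] := decompose n_pos (Hgap _).
  by rewrite Es Hr phi_add addnA; apply: leS_addr; apply: inS_phi.
pose z'' := fsum w'' (x :: xs'' ++ xr').
have Ez'' : z'' = fadd x (fadd (fadd f w') (sumf xr')).
  apply/ffunP => i; have := congr1 (fun g : fact e => g i) Eg.
  by rewrite !ffunE big_cons big_cat /=; lia.
have Bz'' : Bset n s L z''.
  split; first by rewrite /Zf Ez'' !phi_add Hx.1 Es Eb' Hr phi_add; lia.
  exists w'', (x :: xs'' ++ xr'); split=> // y.
  rewrite in_cons mem_cat => /orP [/eqP ->|/orP [/Hxs'' //|/Hxr' //]].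
  by exists b.
have [j Hj] : exists j, 0 < x j.
  by apply: (phi_pos (n := n)); rewrite Hx.1; exact: (betti_pos n_pos (L_betti Lb)).
have [i Hi] : exists i, 0 < r i.
  apply: (phi_pos (n := n)); rewrite lt0n; apply/eqP => Hr0.
  by apply: s_notin_L; rewrite Es Hr0 addn0.
apply: rt_trans (linked_common Bz Bz'' _) (linked_common Bz'' Bz' _).
- by exists j; rewrite Ez'' !ffunE big_cons; split; lia.
- by exists i; move: Hi; rewrite Hr Ez'' !ffunE big_cons => Hi; split; lia.
Qed.

End Bridge.

Theorem lemma5p8 (e : nat) (n : 'I_e -> nat) (u s : nat) :
  min_gen_num_sgp n ->
  in_U_betti n u ->
  let L := fun b => betti n b /\ leS n b u in
  inS n s -> ~ L s ->
  (forall b, betti n b -> ~ L b -> leS n b s -> leS n u b) ->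
  connected_on (Bset n s L) (@adj e).
Proof.
move=> [n_pos _ _] [_ U_chain] L _ s_notin_L above_u z z' Bz Bz'.
have L_betti : forall b, L b -> betti n b by move=> b [].
have L_le_u : forall b, L b -> leS n b u by move=> b [].
have [Zz [w [[|x xr] [Iw Hxs Ez]]]] := Bz.
  have Ezw : z = w by rewrite Ez fsum_nil.
  have -> : z' = z by rewrite Ezw; apply: Iw; rewrite -Ezw Zz Bz'.1.
  exact: rt_refl.
have [Zz' [w' [[|x' xr'] [Iw' Hxs' Ez']]]] := Bz'.
  have Ezw' : z' = w' by rewrite Ez' fsum_nil.
  have -> : z = z' by rewrite Ezw'; apply: Iw'; rewrite -Ezw' Zz Zz'.
  exact: rt_refl.
subst z z'.
have [b [Lb Hb]] := Hxs x (mem_head _ _).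
have [b' [Lb' Hb']] := Hxs' x' (mem_head _ _).
have Hxr : forall t, t \in xr -> isolated_set n L t.
  by move=> t Ht; apply: Hxs; exact: mem_behead.
have Hxr' : forall t, t \in xr' -> isolated_set n L t.
  by move=> t Ht; apply: Hxs'; exact: mem_behead.
case: (U_chain b b' Lb.1 Lb'.1 Lb.2 Lb'.2) => Hbb'.
- exact: (bridge n_pos L_betti L_le_u s_notin_L above_u Bz Bz' Iw'
    Hxr' Hb Lb Hb' Lb' Hbb').
- apply: linked_sym; first exact: adj_sym.
  exact: (bridge n_pos L_betti L_le_u s_notin_L above_u Bz' Bz Iw
    Hxr Hb' Lb' Hb Lb Hbb').
Qed.
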